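(* Let $P$ and $Q$ be finite posets with $\mathbb{E}(\mathrm{uni}_P;\mathrm{ddeg})=\mathbb{E}(\mathrm{uni}_Q;\mathrm{ddeg})$. If $P$ and $Q$ are both CDE then the disjoint union $P+Q$ is CDE. If $P$ and $Q$ are both mCDE then $P+Q$ is mCDE.
   Context: All posets are finite. $\mathbb{E}(\mu;f)=\sum_p f(p)\mathbb{P}(\mu;p)$. $\mathrm{ddeg}(p)$ is the number of elements covered by $p$; $\mathrm{uni}_P$ is the uniform distribution on $P$. $\mathrm{maxchain}_P$ is the distribution on $P$ giving each $p$ probability proportional to the number of maximal chains of $P$ containing $p$. $P$ is CDE if $\mathbb{E}(\mathrm{maxchain}_P;\mathrm{ddeg})=\mathbb{E}(\mathrm{uni}_P;\mathrm{ddeg})$. A $k$-chain is $c_0<\cdots<c_k$; $\mathrm{chain}(k)_P$ gives $p$ probability $\#\{k\text{-chains }c\ni p\}/((k+1)\#\{k\text{-chains}\})$. If $r$ is the length of a longest chain in $P$, $P$ is mCDE if $\mathbb{E}(\mathrm{chain}(k)_P;\mathrm{ddeg})=\mathbb{E}(\mathrm{uni}_P;\mathrm{ddeg})$ for all $k=0,\ldots,r$. $P+Q$ is the disjoint union, with $x\le y$ iff both lie in $P$ and $x\le_P y$ or both lie in $Q$ and $x\le_Q y$. *)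

From HB Require Import structures.
From mathcomp Require Import all_boot all_order all_algebra.
Set Implicit Arguments. Unset Strict Implicit. Unset Printing Implicit Defensive.
Import Order.TTheory GRing.Theory Num.Theory.

Local Open Scope order_scope.

Section PosetNotions.
Context {disp : Order.disp_t} {T : finPOrderType disp}.

Definition covers (x y : T) : bool :=
  (y < x) && [forall z : T, ~~ ((y < z) && (z < x))].

Definition ddeg (p : T) : nat := #|[set q : T | covers p q]|.

Definition is_chain (c : {set T}) : bool :=
  [forall x in c, forall y in c, (x <= y) || (y <= x)].

Definition is_maxchain (c : {set T}) : bool :=
  is_chain c && [forall c' : {set T}, (is_chain c' && (c \subset c')) ==> (c' == c)].

(* k-chain c_0 < ... < c_k, represented by its (k+1)-element underlying set *)
Definition is_kchain (k : nat) (c : {set T}) : bool :=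
  is_chain c && (#|c| == k.+1)%N.

Definition poset_rank : nat := (\max_(c : {set T} | is_chain c) #|c|.-1)%N.

Local Open Scope ring_scope.

Definition E_uni : rat := (\sum_(p : T) (ddeg p)%:R) / #|T|%:R.

Definition nmax (p : T) : nat := #|[set c : {set T} | is_maxchain c && (p \in c)]|.
Definition E_maxchain : rat :=
  \sum_(p : T) (ddeg p)%:R * ((nmax p)%:R / (\sum_(q : T) (nmax q)%:R)).

Definition nkchain (k : nat) (p : T) : nat :=
  #|[set c : {set T} | is_kchain k c && (p \in c)]|.
Definition E_chain (k : nat) : rat :=
  \sum_(p : T) (ddeg p)%:R *
     ((nkchain k p)%:R / ((k.+1)%:R * (#|[set c : {set T} | is_kchain k c]|)%:R)).

Definition CDE : Prop := E_maxchain = E_uni.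
Definition mCDE : Prop := forall k : nat, (k <= poset_rank)%N -> E_chain k = E_uni.

End PosetNotions.

Arguments ddeg {disp T}.
Arguments E_uni {disp} T.
Arguments E_maxchain {disp} T.
Arguments E_chain {disp} T k.
Arguments CDE {disp} T.
Arguments mCDE {disp} T.

Section DisjointUnion.
Context {d1 d2 : Order.disp_t} (P : finPOrderType d1) (Q : finPOrderType d2).

Definition dsum : Type := (P + Q)%type.
HB.instance Definition _ := Finite.on dsum.

Definition dsum_le (x y : dsum) : bool :=
  match x, y with
  | inl a, inl b => (a <= b)%O
  | inr a, inr b => (a <= b)%O
  | _, _ => false
  end.
Definition dsum_lt (x y : dsum) : bool :=
  match x, y with
  | inl a, inl b => (a < b)%O
  | inr a, inr b => (a < b)%O
  | _, _ => false
  end.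

Lemma dsum_lt_def x y : dsum_lt x y = (y != x) && dsum_le x y.
Proof. by case: x y => a [] b //=; rewrite ?lt_def //; case: (_ != _). Qed.
Lemma dsum_le_refl : reflexive dsum_le.
Proof. by case=> a /=. Qed.
Lemma dsum_le_anti : antisymmetric dsum_le.
Proof. by case=> a [] b //= /le_anti ->. Qed.
Lemma dsum_le_trans : transitive dsum_le.
Proof. by case=> a [] b [] c //=; apply: le_trans. Qed.

HB.instance Definition _ := Order.isPOrder.Build (Order.Disp tt tt) dsum
  dsum_lt_def dsum_le_refl dsum_le_anti dsum_le_trans.

End DisjointUnion.

From HB Require Import structures.
From mathcomp Require Import all_boot all_order all_algebra.
Set Implicit Arguments. Unset Strict Implicit. Unset Printing Implicit Defensive.
Import Order.TTheory GRing.Theory Num.Theory.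

(* Each summand of P + Q is a union of connected components, so covering
   relations, chains and maximal chains of P + Q through a point of P are
   exactly those of P; hence ddeg and the chain counts of a point do not change
   when passing to P + Q.  Each of the expectations in question is a ratio
   sum_p ddeg(p) w(p) / sum_p w(p) for a weight w, and the weight of P + Q
   restricts to the weights of P and Q.  Ratios equal to a common value E
   combine to E, except that a summand whose weights all vanish must be
   discarded: this happens for k-chains with k beyond the rank of P. *)

Section Chains.
Context {d : Order.disp_t} {T : finPOrderType d}.

Lemma is_chain_card_le_rank (c : {set T}) : is_chain c -> (#|c|.-1 <= poset_rank (T := T))%N.
Proof. exact: (@leq_bigmax_cond _ (fun c : {set T} => is_chain c) (fun c => #|c|.-1)). Qed.

Lemma nkchain_gt_rank k (p : T) : (poset_rank (T := T) < k)%N -> nkchain k p = 0%N.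
Proof.
move=> rank_lt_k; apply/eqP; rewrite cards_eq0; apply/eqP/setP => c; rewrite !inE.
apply/negbTE/negP => /andP [/andP [chc /eqP ck] _].
by have := is_chain_card_le_rank chc; rewrite ck /= leqNgt rank_lt_k.
Qed.

Lemma sum_nkchain k : (\sum_(p : T) nkchain k p = #|[set c : {set T} | is_kchain k c]| * k.+1)%N.
Proof.
rewrite /nkchain; under eq_bigr do rewrite -sum1_card big_mkcond.
rewrite exchange_big -sum_nat_const [RHS]big_mkcond; apply: eq_bigr => c _ /=.
rewrite inE; case kc: (is_kchain k c); last by rewrite big1 // => p _; rewrite !inE kc.
case/andP: (kc) => _ /eqP <-; rewrite -sum1_card [RHS]big_mkcond.
by apply: eq_bigr => p _; rewrite !inE kc.
Qed.

End Chains.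

Section ComponentEmbedding.
Local Open Scope order_scope.
Context {dU dT : Order.disp_t} {U : finPOrderType dU} {T : finPOrderType dT}.
Variable f : U -> T.
Hypothesis f_inj : injective f.
Hypothesis f_le : forall a b, (f a <= f b) = (a <= b).
Hypothesis f_comparable : forall a y, (f a <= y) || (y <= f a) -> exists b, y = f b.

Lemma f_lt a b : (f a < f b) = (a < b).
Proof. by rewrite !lt_def f_le (inj_eq f_inj). Qed.

Lemma f_comparable_lt a y : (f a < y) || (y < f a) -> exists b, y = f b.
Proof. by move=> cmp; apply: (f_comparable (a := a)); case/orP: cmp => /ltW ->; rewrite ?orbT. Qed.

Lemma covers_embed a b : covers (f a) (f b) = covers a b.
Proof.
rewrite /covers f_lt; case: (b < a) => //=.
apply/forallP/forallP => nobetween z; first by have := nobetween (f z); rewrite !f_lt.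
apply/negP => /andP [bz za].
have [c ezc] : exists c, z = f c by apply: (f_comparable_lt (a := b)); rewrite bz.
by move: bz za (nobetween c); rewrite ezc !f_lt => -> ->.
Qed.

Lemma ddeg_embed a : ddeg (f a) = ddeg a.
Proof.
rewrite /ddeg -(card_imset _ f_inj); apply: eq_card => y; rewrite inE.
apply/idP/imsetP => [cov | [b]]; last by rewrite inE => ? ->; rewrite covers_embed.
have [b eyb] : exists b, y = f b.
  by apply: (f_comparable_lt (a := a)); case/andP: cov => ->; rewrite orbT.
by exists b; rewrite // inE -covers_embed -eyb.
Qed.

Lemma is_chain_imset (c : {set U}) : is_chain (f @: c) = is_chain c.
Proof.
apply/forall_inP/forall_inP => comparable x xc.
  apply/forall_inP => y yc.
  by move/forall_inP: (comparable _ (imset_f f xc)) => /(_ _ (imset_f f yc)); rewrite !f_le.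
case/imsetP: xc => {}x xc ->; apply/forall_inP => _ /imsetP [y yc ->].
by rewrite !f_le; move/forall_inP: (comparable x xc); apply.
Qed.

Lemma chain_preimageK (c : {set T}) a : is_chain c -> f a \in c -> f @: (f @^-1: c) = c.
Proof.
move=> chc ac; apply/setP => y; apply/imsetP/idP => [[b] | yc]; first by rewrite inE => ? ->.
have [b eyb] : exists b, y = f b.
  by apply: (f_comparable (a := a)); move/forall_inP: chc => /(_ _ ac)/forall_inP; apply.
by exists b; rewrite // inE -eyb.
Qed.

Lemma nkchain_embed k a : nkchain k (f a) = nkchain k a.
Proof.
rewrite /nkchain -(card_imset _ (imset_inj f_inj)); apply: eq_card => c; rewrite inE.
apply/idP/imsetP => [/andP [/andP [chc ck] ac] | [c0]].
  exists (f @^-1: c); last by rewrite (chain_preimageK chc ac).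
  by rewrite inE /is_kchain -is_chain_imset -(card_imset _ f_inj) (chain_preimageK chc ac) chc ck inE.
rewrite inE => /andP [/andP [chc0 ck0] ac0] ->.
by rewrite /is_kchain is_chain_imset card_imset // chc0 ck0 mem_imset.
Qed.

Lemma is_maxchain_imset (c : {set U}) a : a \in c -> is_maxchain (f @: c) = is_maxchain c.
Proof.
move=> ac; rewrite /is_maxchain is_chain_imset; case: (is_chain c) => //=.
apply/forallP/forallP => maximal c'; apply/implyP => /andP [chc' cc'].
  have := implyP (maximal (f @: c')); rewrite is_chain_imset chc' imsetS //.
  by move=> /(_ isT) /eqP /(imset_inj f_inj) ->.
have fac' : f a \in c' by rewrite (subsetP cc') ?imset_f.
have cpre : c \subset f @^-1: c'.
  by apply/subsetP => x xc; rewrite inE (subsetP cc') ?imset_f.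
have := implyP (maximal (f @^-1: c')).
by rewrite -is_chain_imset (chain_preimageK chc' fac') chc' cpre => /(_ isT) /eqP <-;
  rewrite (chain_preimageK chc' fac').
Qed.

Lemma nmax_embed a : nmax (f a) = nmax a.
Proof.
rewrite /nmax -(card_imset _ (imset_inj f_inj)); apply: eq_card => c; rewrite inE.
apply/idP/imsetP => [/andP [mc ac] | [c0]].
  have chc : is_chain c by case/andP: mc.
  have ac' : a \in f @^-1: c by rewrite inE.
  exists (f @^-1: c); last by rewrite (chain_preimageK chc ac).
  by rewrite inE -(is_maxchain_imset ac') (chain_preimageK chc ac) mc ac'.
by rewrite inE => /andP [mc0 ac0] ->; rewrite (is_maxchain_imset ac0) mc0 mem_imset.
Qed.

Lemma chain_card_le_rank (c : {set T}) a :
  is_chain c -> f a \in c -> (#|c|.-1 <= poset_rank (T := U))%N.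
Proof.
move=> chc ac; rewrite -(chain_preimageK chc ac) card_imset //.
apply: is_chain_card_le_rank.
by rewrite -is_chain_imset (chain_preimageK chc ac).
Qed.

End ComponentEmbedding.

Section WeightedExpectation.
Local Open Scope ring_scope.
Context {d : Order.disp_t} {T : finPOrderType d}.
Implicit Types (w : T -> nat) (E : rat).

Definition E_weight w : rat :=
  \sum_(p : T) (ddeg p)%:R * ((w p)%:R / (\sum_(q : T) (w q)%:R)).

(* The expectation of ddeg under the weight w is E, written without division
   so that it also makes sense (and holds for every E) when w vanishes. *)
Definition balanced w E : Prop :=
  (\sum_(p : T) ddeg p * w p)%N%:R = E * (\sum_(p : T) w p)%N%:R.

Lemma E_weightE w : E_weight w = (\sum_(p : T) ddeg p * w p)%N%:R / (\sum_(p : T) w p)%N%:R.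
Proof. by rewrite /E_weight !natr_sum mulr_suml; apply: eq_bigr => p _; rewrite natrM mulrA. Qed.

Lemma E_uni_weight : E_uni T = E_weight (fun=> 1%N).
Proof. by rewrite E_weightE sum1_card natr_sum; under eq_bigr do rewrite muln1. Qed.

Lemma E_maxchain_weight : E_maxchain T = E_weight nmax.
Proof. by []. Qed.

Lemma E_chain_weight k : E_chain T k = E_weight (nkchain k).
Proof. by rewrite /E_chain /E_weight -natr_sum sum_nkchain natrM mulrC. Qed.

Lemma sum_ddeg_weight_eq0 w : (\sum_(p : T) w p)%N = 0%N -> (\sum_(p : T) ddeg p * w p)%N = 0%N.
Proof.
move/eqP; rewrite sum_nat_eq0 => /forallP w0.
by apply: big1 => p _; rewrite (eqP (w0 p)) muln0.
Qed.

Lemma E_weight_eq0 w : (\sum_(p : T) w p)%N = 0%N -> E_weight w = 0.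
Proof. by move=> w0; rewrite E_weightE w0 invr0 mulr0. Qed.

Lemma balanced_E_weight w : balanced w (E_weight w).
Proof.
rewrite /balanced E_weightE; have [w0 | w_neq0] := eqVneq (\sum_(p : T) w p)%N 0%N.
  by rewrite w0 sum_ddeg_weight_eq0 // mulr0.
by rewrite divfK // pnatr_eq0.
Qed.

Lemma balanced_eq0 w E : (forall p, w p = 0%N) -> balanced w E.
Proof.
move=> w0; have sum_w0 : (\sum_(p : T) w p)%N = 0%N by apply: big1 => p _; apply: w0.
by rewrite /balanced sum_w0 sum_ddeg_weight_eq0 // mulr0.
Qed.

Lemma E_weight_balanced w E :
  balanced w E -> (\sum_(p : T) w p)%N != 0%N -> E_weight w = E.
Proof. by rewrite /balanced E_weightE => -> w_neq0; rewrite mulfK // pnatr_eq0. Qed.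

Lemma balanced_maxchain : CDE T -> balanced nmax (E_uni T).
Proof. by rewrite /CDE E_maxchain_weight => <-; apply: balanced_E_weight. Qed.

Lemma balanced_kchain k : mCDE T -> balanced (nkchain k) (E_uni T).
Proof.
move=> mcde; have [k_le | rank_lt] := leqP k (poset_rank (T := T)).
  by rewrite -(mcde k k_le) E_chain_weight; apply: balanced_E_weight.
by apply: balanced_eq0 => p; apply: nkchain_gt_rank.
Qed.

End WeightedExpectation.

Section DisjointUnionExpectation.
Context {d1 d2 : Order.disp_t} (P : finPOrderType d1) (Q : finPOrderType d2).
Local Notation PQ := (dsum P Q).

Lemma inl_inj : injective (inl : P -> PQ). Proof. by move=> a b []. Qed.
Lemma inr_inj : injective (inr : Q -> PQ). Proof. by move=> a b []. Qed.

Lemma inl_le (a b : P) : ((inl a : PQ) <= inl b)%O = (a <= b)%O. Proof. by []. Qed.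
Lemma inr_le (a b : Q) : ((inr a : PQ) <= inr b)%O = (a <= b)%O. Proof. by []. Qed.

Lemma inl_comparable (a : P) (y : PQ) :
  ((inl a : PQ) <= y)%O || (y <= inl a)%O -> exists b, y = inl b.
Proof. by case: y => // b; exists b. Qed.

Lemma inr_comparable (a : Q) (y : PQ) :
  ((inr a : PQ) <= y)%O || (y <= inr a)%O -> exists b, y = inr b.
Proof. by case: y => // b; exists b. Qed.

Lemma ddeg_inl (a : P) : ddeg (inl a : PQ) = ddeg a.
Proof. exact: ddeg_embed inl_inj inl_le inl_comparable a. Qed.
Lemma ddeg_inr (a : Q) : ddeg (inr a : PQ) = ddeg a.
Proof. exact: ddeg_embed inr_inj inr_le inr_comparable a. Qed.

Lemma nmax_inl (a : P) : nmax (inl a : PQ) = nmax a.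
Proof. exact: nmax_embed inl_inj inl_le inl_comparable a. Qed.
Lemma nmax_inr (a : Q) : nmax (inr a : PQ) = nmax a.
Proof. exact: nmax_embed inr_inj inr_le inr_comparable a. Qed.

Lemma nkchain_inl k (a : P) : nkchain k (inl a : PQ) = nkchain k a.
Proof. exact: nkchain_embed inl_inj inl_le inl_comparable k a. Qed.
Lemma nkchain_inr k (a : Q) : nkchain k (inr a : PQ) = nkchain k a.
Proof. exact: nkchain_embed inr_inj inr_le inr_comparable k a. Qed.

Lemma poset_rank_dsum :
  (poset_rank (T := PQ) <= maxn (poset_rank (T := P)) (poset_rank (T := Q)))%N.
Proof.
apply/bigmax_leqP => c chc; have [-> | [[a | a] ac]] := set_0Vmem c; first by rewrite cards0.
  exact: leq_trans (chain_card_le_rank inl_inj inl_le inl_comparable chc ac) (leq_maxl _ _).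
exact: leq_trans (chain_card_le_rank inr_inj inr_le inr_comparable chc ac) (leq_maxr _ _).
Qed.

Section Weights.
Variables (w : PQ -> nat) (wP : P -> nat) (wQ : Q -> nat).
Hypotheses (w_inl : forall a, w (inl a) = wP a) (w_inr : forall a, w (inr a) = wQ a).

Lemma sum_weight_dsum : (\sum_(x : PQ) w x = \sum_(a : P) wP a + \sum_(a : Q) wQ a)%N.
Proof. by rewrite big_sumType; congr (_ + _)%N; apply: eq_bigr => a _; rewrite ?w_inl ?w_inr. Qed.

Lemma sum_ddeg_weight_dsum : (\sum_(x : PQ) ddeg x * w x =
  \sum_(a : P) ddeg a * wP a + \sum_(a : Q) ddeg a * wQ a)%N.
Proof.
rewrite big_sumType; congr (_ + _)%N; apply: eq_bigr => a _.
  by rewrite ddeg_inl w_inl.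
by rewrite ddeg_inr w_inr.
Qed.

Lemma balanced_dsum E : balanced wP E -> balanced wQ E -> balanced w E.
Proof.
rewrite /balanced sum_weight_dsum sum_ddeg_weight_dsum !natrD => -> ->.
by rewrite mulrDr.
Qed.

Lemma E_weight_dsum E : balanced wP E -> balanced wQ E ->
  E_weight wP = E \/ E_weight wQ = E -> E_weight w = E.
Proof.
move=> balP balQ E_wPQ; have [w0 | w_neq0] := eqVneq (\sum_(x : PQ) w x)%N 0%N.
  move: (w0); rewrite sum_weight_dsum => /eqP; rewrite addn_eq0 => /andP [/eqP wP0 /eqP wQ0].
  by rewrite E_weight_eq0 //; case: E_wPQ => <-; rewrite E_weight_eq0.
exact: E_weight_balanced (balanced_dsum balP balQ) w_neq0.
Qed.

End Weights.

Lemma E_uni_dsum : E_uni P = E_uni Q -> E_uni PQ = E_uni P.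
Proof.
move=> EPQ; rewrite !E_uni_weight.
apply: (E_weight_dsum (wP := fun=> 1%N) (wQ := fun=> 1%N)) => //; last by left.
  exact: balanced_E_weight.
by rewrite -E_uni_weight EPQ E_uni_weight; apply: balanced_E_weight.
Qed.

End DisjointUnionExpectation.

Theorem mainTheorem2 (d1 d2 : Order.disp_t)
  (P : finPOrderType d1) (Q : finPOrderType d2) :
  E_uni P = E_uni Q ->
  (CDE P -> CDE Q -> CDE (dsum P Q)) /\
  (mCDE P -> mCDE Q -> mCDE (dsum P Q)).
Proof.
move=> EPQ; have E_uniPQ := E_uni_dsum EPQ; split.
  move=> cdeP cdeQ; rewrite /CDE E_uniPQ E_maxchain_weight.
  apply: (E_weight_dsum (@nmax_inl _ _ P Q) (@nmax_inr _ _ P Q)).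
  - exact: balanced_maxchain.
  - by rewrite EPQ; apply: balanced_maxchain.
  - by left; rewrite -E_maxchain_weight.
move=> mcdeP mcdeQ k k_le; rewrite E_uniPQ E_chain_weight.
apply: (E_weight_dsum (@nkchain_inl _ _ P Q k) (@nkchain_inr _ _ P Q k)).
- exact: balanced_kchain.
- by rewrite EPQ; apply: balanced_kchain.
have := leq_trans k_le (poset_rank_dsum P Q); rewrite leq_max => /orP [k_leP | k_leQ].
  by left; rewrite -E_chain_weight mcdeP.
by right; rewrite -E_chain_weight mcdeQ.
Qed.
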